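(* Let $x\in\mathbb{D}$. If $\sup_{\tau\in[0,1]}\#\mathbb{B}_\tau(x)=0$, then $\mathfrak{T}_{rim}$ is jointly $J_1$-continuous at $x$. Consequently, for $r\in\mathbb{N}$, $\mathfrak{T}^{(r)}_{rim}$ is jointly $J_1$-continuous at $x$ if $\sup_{\tau\in[0,1]}\#\mathbb{B}_\tau(\mathfrak{T}^{(j)}_{rim}(x))=0$ for all $j=0,\dots,r-1$.
   Context: $\mathbb{D}=\mathbb{D}([0,1],\mathbb{R})$ is the space of càdlàg functions on $[0,1]$ with the Skorokhod $J_1$-topology, $\|x\|=\sup_{0\le\tau\le1}|x(\tau)|$. $\Lambda$ is the set of continuous strictly increasing $\lambda:[0,1]\to[0,1]$ with $\lambda(0)=0,\lambda(1)=1$; $I$ is the identity. $\Psi:\mathbb{D}\to\mathbb{D}$ is jointly $J_1$-continuous at $x$ if for every sequence $x_n\to x$ in $J_1$ there exist $\lambda_n\in\Lambda$ such that simultaneously $\|\lambda_n-I\|\to0$, $\|x_n\circ\lambda_n-x\|\to0$ and $\|\Psi(x_n)\circ\lambda_n-\Psi(x)\|\to0$. For $x\in\mathbb{D}$, $\Delta x(\tau)=x(\tau)-x(\tau-)$ ($\tau>0$), $\Delta x(0)=0$, and $\widetilde{\mathcal{S}}_\Delta(x)(\tau)=\sup_{0\le s\le\tau}|\Delta x(s)|$. The last modulus record time is $\widetilde L_\tau(x)=\sup\{s\in[0,\tau]:|\Delta x(s)|=\widetilde{\mathcal{S}}_\Delta(x)(\tau)\}$, $\tau\in[0,1]$. The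 signed largest trimmer is $\mathfrak{T}_{rim}(x)(\tau)=x(\tau)-\Delta x(\widetilde L_\tau(x))$; $\mathfrak{T}^{(0)}_{rim}(x)=x$, $\mathfrak{T}^{(1)}_{rim}=\mathfrak{T}_{rim}$, $\mathfrak{T}^{(r)}_{rim}(x)=\mathfrak{T}_{rim}(\mathfrak{T}^{(r-1)}_{rim}(x))$. Let $\widetilde{\mathbb{A}}_\tau(x)=\{0<s\le\tau:|\Delta x(s)|=\widetilde{\mathcal{S}}_\Delta(x)(\tau)\}$ (a finite set, empty by convention if $x$ is continuous on $[0,\tau]$); writing $\widetilde{\mathbb{A}}_\tau(x)=\{s_1<\dots<s_N\}$, let $\mathbb{B}_\tau(x)=\{s_k\in\widetilde{\mathbb{A}}_\tau(x):\Delta x(s_k)=-\Delta x(s_{k-1}),\ k=2,\dots,N\}$ be the set of sign-changing largest modulus jumps. *)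

From Stdlib Require Import Reals ClassicalEpsilon.
Open Scope R_scope.

(* Functions on [0,1] are represented as R -> R; only values on [0,1] matter. *)
Definition in01 (t : R) : Prop := 0 <= t <= 1.

Definition is_left_lim (x : R -> R) (t l : R) : Prop :=
  forall eps, 0 < eps -> exists d, 0 < d /\
    forall s, 0 <= s -> t - d < s < t -> Rabs (x s - l) < eps.

Definition cadlag (x : R -> R) : Prop :=
  (forall t, 0 <= t < 1 -> forall eps, 0 < eps -> exists d, 0 < d /\
      forall s, t <= s < t + d -> s <= 1 -> Rabs (x s - x t) < eps) /\
  (forall t, 0 < t <= 1 -> exists l, is_left_lim x t l).

Definition leftlim (x : R -> R) (t : R) : R :=
  epsilon (inhabits 0) (fun l => is_left_lim x t l).

Definition Delta (x : R -> R) (t : R) : R :=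
  if Rle_dec t 0 then 0 else x t - leftlim x t.

Definition SDelta (x : R -> R) (tau : R) : R :=
  epsilon (inhabits 0)
    (is_lub (fun m => exists s, 0 <= s <= tau /\ m = Rabs (Delta x s))).

Definition Lrec (x : R -> R) (tau : R) : R :=
  epsilon (inhabits 0)
    (is_lub (fun s => 0 <= s <= tau /\ Rabs (Delta x s) = SDelta x tau)).

Definition trim (x : R -> R) : R -> R :=
  fun tau => x tau - Delta x (Lrec x tau).

Definition trim_iter (r : nat) (x : R -> R) : R -> R := Nat.iter r trim x.

(* tilde A_tau(x), with the convention that it is empty when
   x is continuous on [0,tau] (i.e. SDelta x tau = 0). *)
Definition Aset (x : R -> R) (tau s : R) : Prop :=
  0 < SDelta x tau /\ 0 < s <= tau /\ Rabs (Delta x s) = SDelta x tau.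

Definition Bset (x : R -> R) (tau s : R) : Prop :=
  Aset x tau s /\
  exists s', Aset x tau s' /\ s' < s /\
    (forall u, Aset x tau u -> ~ (s' < u < s)) /\
    Delta x s = - Delta x s'.

Definition unif_cv (f : nat -> R -> R) (g : R -> R) : Prop :=
  forall eps, 0 < eps -> exists N, forall n, (N <= n)%nat ->
    forall t, in01 t -> Rabs (f n t - g t) <= eps.

Definition in_Lambda (l : R -> R) : Prop :=
  l 0 = 0 /\ l 1 = 1 /\
  (forall t, in01 t -> in01 (l t)) /\
  (forall s t, in01 s -> in01 t -> s < t -> l s < l t) /\
  (forall t, in01 t -> forall eps, 0 < eps -> exists d, 0 < d /\
     forall s, in01 s -> Rabs (s - t) < d -> Rabs (l s - l t) < eps).

Definition J1_cv (xn : nat -> R -> R) (x : R -> R) : Prop :=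
  exists ln : nat -> R -> R, (forall n, in_Lambda (ln n)) /\
    unif_cv ln (fun t => t) /\
    unif_cv (fun n t => xn n (ln n t)) x.

Definition jointly_J1_continuous_at (Psi : (R -> R) -> (R -> R)) (x : R -> R) : Prop :=
  forall xn : nat -> R -> R, (forall n, cadlag (xn n)) -> J1_cv xn x ->
  exists ln : nat -> R -> R, (forall n, in_Lambda (ln n)) /\
    unif_cv ln (fun t => t) /\
    unif_cv (fun n t => xn n (ln n t)) x /\
    unif_cv (fun n t => Psi (xn n) (ln n t)) (Psi x).

Definition no_sign_change (x : R -> R) : Prop :=
  forall tau, in01 tau -> forall s, ~ Bset x tau s.

(* A cadlag path has only finitely many jumps of modulus above any
   positive level.  Hence, when the running maximal jump modulus S x tau is not
   small, every jump of x up to tau whose modulus is close to S x tau is a maximal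
   one, and if no two consecutive maximal jumps have opposite signs all maximal
   jumps up to tau are equal.  A path y uniformly close to x must take its last
   largest jump at such a time, so the jump removed by the trimmer from y is close
   to the one removed from x: the trimmer is continuous for uniform convergence at
   x.  The trimmer commutes with time changes, trim (x o l) = trim x o l, so the
   time changes witnessing x_n -> x in J1 also witness trim x_n -> trim x, and the
   statement for the iterates follows by induction. *)

From Stdlib Require Import Reals Lra Lia ClassicalEpsilon Classical List.
Open Scope R_scope.

Lemma Delta_0 (z : R -> R) : Delta z 0 = 0.
Proof. unfold Delta; destruct (Rle_dec 0 0); [reflexivity | lra]. Qed.

Lemma Delta_pos (z : R -> R) t : 0 < t -> Delta z t = z t - leftlim z t.
Proof. intro Ht; unfold Delta; destruct (Rle_dec t 0); [lra | reflexivity]. Qed.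

Lemma left_lim_bound (z : R -> R) t l a c e : 0 < t -> a < t -> is_left_lim z t l ->
  (forall u, a < u < t -> 0 <= u -> Rabs (z u - c) <= e) -> Rabs (l - c) <= e.
Proof.
  intros Ht Ha Hl Hb. apply Rle_plus_epsilon. intros k Hk.
  destruct (Hl k Hk) as [d [Hd Hd']].
  set (m := Rmax a (Rmax (t - d) 0)).
  assert (Hm1 := Rmax_l a (Rmax (t - d) 0)). assert (Hm2 := Rmax_r a (Rmax (t - d) 0)).
  assert (Hm3 := Rmax_l (t - d) 0). assert (Hm4 := Rmax_r (t - d) 0).
  assert (Hmt : m < t) by (apply Rmax_lub_lt; [| apply Rmax_lub_lt]; lra).
  fold m in Hm1, Hm2.
  assert (H1 := Hd' ((m + t) / 2) ltac:(lra) ltac:(lra)).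
  assert (H2 := Hb ((m + t) / 2) ltac:(lra) ltac:(lra)).
  clear - H1 H2. split_Rabs; lra.
Qed.

Lemma left_lim_unique (z : R -> R) t l1 l2 : 0 < t ->
  is_left_lim z t l1 -> is_left_lim z t l2 -> l1 = l2.
Proof.
  intros Ht H1 H2.
  assert (Hle : Rabs (l1 - l2) <= 0).
  { apply Rle_plus_epsilon. intros e He. rewrite Rplus_0_l.
    destruct (H2 e He) as [d [Hd Hd']].
    apply (left_lim_bound z t l1 (t - d) l2 e Ht); [lra | exact H1 |].
    intros u Hu Hu0. left. apply Hd'; lra. }
  assert (H := Rabs_pos (l1 - l2)). clear - Hle H. split_Rabs; lra.
Qed.

Lemma is_left_lim_minus (y x : R -> R) t ly lx :
  is_left_lim y t ly -> is_left_lim x t lx ->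
  is_left_lim (fun s => y s - x s) t (ly - lx).
Proof.
  intros Hy Hx eps He.
  destruct (Hy (eps / 2) ltac:(lra)) as [d1 [Hd1 Hd1']].
  destruct (Hx (eps / 2) ltac:(lra)) as [d2 [Hd2 Hd2']].
  exists (Rmin d1 d2). split; [apply Rmin_pos; auto |].
  assert (Hm1 := Rmin_l d1 d2). assert (Hm2 := Rmin_r d1 d2).
  intros s Hs0 Hs.
  assert (H1 := Hd1' s Hs0 ltac:(lra)). assert (H2 := Hd2' s Hs0 ltac:(lra)).
  clear - H1 H2. split_Rabs; lra.
Qed.

Lemma leftlim_spec (z : R -> R) t : cadlag z -> 0 < t <= 1 -> is_left_lim z t (leftlim z t).
Proof. intros [_ Hl] Ht. unfold leftlim. apply epsilon_spec, Hl, Ht. Qed.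

Lemma cadlag_minus (f g : R -> R) : cadlag f -> cadlag g -> cadlag (fun t => f t - g t).
Proof.
  intros [Hfr Hfl] [Hgr Hgl]. split.
  - intros t Ht eps He.
    destruct (Hfr t Ht (eps / 2) ltac:(lra)) as [d1 [Hd1 Hd1']].
    destruct (Hgr t Ht (eps / 2) ltac:(lra)) as [d2 [Hd2 Hd2']].
    exists (Rmin d1 d2). split; [apply Rmin_pos; auto |].
    assert (Hm1 := Rmin_l d1 d2). assert (Hm2 := Rmin_r d1 d2).
    intros s Hs Hs1.
    assert (H1 := Hd1' s ltac:(lra) Hs1). assert (H2 := Hd2' s ltac:(lra) Hs1).
    clear - H1 H2. split_Rabs; lra.
  - intros t Ht. destruct (Hfl t Ht) as [lf Hlf]. destruct (Hgl t Ht) as [lg Hlg].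
    exists (lf - lg). apply is_left_lim_minus; auto.
Qed.

Lemma Delta_bound_of_osc (z : R -> R) s a c e : cadlag z -> 0 < s <= 1 -> a < s ->
  (forall u, a < u <= s -> 0 <= u -> Rabs (z u - c) <= e) -> Rabs (Delta z s) <= 2 * e.
Proof.
  intros Hz Hs Ha Hosc. rewrite Delta_pos by lra.
  assert (H1 : Rabs (leftlim z s - c) <= e).
  { apply (left_lim_bound z s _ a c e); try lra; [apply leftlim_spec; auto |].
    intros u Hu Hu0. apply Hosc; lra. }
  assert (H2 := Hosc s ltac:(lra) ltac:(lra)).
  clear - H1 H2. split_Rabs; lra.
Qed.

Lemma Delta_small_left (z : R -> R) t eps : cadlag z -> 0 <= t <= 1 -> 0 < eps ->
  exists d, 0 < d /\ forall s, 0 <= s < t -> t - d < s -> Rabs (Delta z s) <= eps.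
Proof.
  intros Hz Ht He.
  destruct (Req_dec t 0) as [Ht0 | Ht0]; [exists 1; split; [lra | intros; lra] |].
  destruct (proj2 Hz t ltac:(lra)) as [l Hl].
  destruct (Hl (eps / 2) ltac:(lra)) as [d [Hd Hd']].
  exists d. split; auto. intros s Hs Hsd.
  destruct (Req_dec s 0) as [-> | Hs0]; [rewrite Delta_0, Rabs_R0; lra |].
  replace eps with (2 * (eps / 2)) by field.
  apply (Delta_bound_of_osc z s (t - d) l); auto; try lra.
  intros u Hu Hu0. left. apply Hd'; lra.
Qed.

Lemma Delta_small_right (z : R -> R) t eps : cadlag z -> 0 <= t <= 1 -> 0 < eps ->
  exists d, 0 < d /\ forall s, t < s <= 1 -> s < t + d -> Rabs (Delta z s) <= eps.
Proof.
  intros Hz Ht He.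
  destruct (Req_dec t 1) as [Ht1 | Ht1]; [exists 1; split; [lra | intros; lra] |].
  destruct (proj1 Hz t ltac:(lra) (eps / 2) ltac:(lra)) as [d [Hd Hd']].
  exists d. split; auto. intros s Hs Hsd.
  replace eps with (2 * (eps / 2)) by field.
  apply (Delta_bound_of_osc z s t (z t)); auto; try lra.
  intros u Hu Hu0. left. apply Hd'; lra.
Qed.

Lemma Delta_small_near (z : R -> R) t eps : cadlag z -> in01 t -> 0 < eps ->
  exists d, 0 < d /\
    forall s, in01 s -> s <> t -> Rabs (s - t) < d -> Rabs (Delta z s) <= eps.
Proof.
  intros Hz Ht He.
  destruct (Delta_small_left z t eps Hz Ht He) as [d1 [Hd1 Hd1']].
  destruct (Delta_small_right z t eps Hz Ht He) as [d2 [Hd2 Hd2']].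
  exists (Rmin d1 d2). split; [apply Rmin_pos; auto |].
  assert (Hm1 := Rmin_l d1 d2). assert (Hm2 := Rmin_r d1 d2).
  unfold in01 in *. intros s Hs Hst Hsd. apply Rabs_def2 in Hsd.
  destruct (Rtotal_order s t) as [Hlt | [Heq | Hgt]];
    [apply Hd1' | contradiction | apply Hd2']; lra.
Qed.

Lemma exists_above_lub (S : R -> Prop) c a : is_lub S c -> a < c -> exists t, S t /\ a < t.
Proof.
  intros [_ Hlub] Ha. apply NNPP. intro Hn.
  assert (Hub : is_upper_bound S a).
  { intros t Ht. apply Rnot_lt_le. intro Hat. apply Hn. exists t. auto. }
  specialize (Hlub a Hub). lra.
Qed.

Lemma real_induction01 (P : R -> Prop) : P 0 ->
  (forall c, in01 c -> exists d, 0 < d /\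
     forall t0 t, in01 t0 -> in01 t -> c - d < t0 <= c -> c <= t < c + d -> P t0 -> P t) ->
  P 1.
Proof.
  intros H0 Hstep.
  set (S := fun t => in01 t /\ P t).
  assert (HS0 : S 0) by (split; [unfold in01; lra | exact H0]).
  assert (Hb : bound S) by (exists 1; intros t [[_ Ht] _]; exact Ht).
  destruct (completeness S Hb (ex_intro _ 0 HS0)) as [c Hc].
  assert (Hc0 : 0 <= c) by (apply (proj1 Hc), HS0).
  assert (Hc1 : c <= 1) by (apply (proj2 Hc); intros t [[_ Ht] _]; exact Ht).
  destruct (Hstep c (conj Hc0 Hc1)) as [d [Hd Hd']].
  destruct (exists_above_lub S c (c - d) Hc ltac:(lra)) as [t0 [[Ht0 HPt0] Ht0d]].
  assert (Ht0c : t0 <= c) by (apply (proj1 Hc); split; auto).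
  set (t := Rmin 1 (c + d / 2)).
  assert (Hm1 := Rmin_l 1 (c + d / 2)). assert (Hm2 := Rmin_r 1 (c + d / 2)).
  fold t in Hm1, Hm2.
  assert (Hct : c <= t) by (apply Rmin_glb; lra).
  assert (Ht01 : in01 t) by (unfold in01; lra).
  assert (HPt : P t) by (apply (Hd' t0 t); auto; lra).
  assert (Htc : t <= c) by (apply (proj1 Hc); split; auto).
  destruct (Rle_lt_dec 1 (c + d / 2)) as [H1 | H1].
  - unfold t in HPt. rewrite Rmin_left in HPt by exact H1. exact HPt.
  - unfold t in Htc. rewrite Rmin_right in Htc; lra.
Qed.

Lemma finite_big_jumps (z : R -> R) eps : cadlag z -> 0 < eps ->
  exists l : list R, forall s, in01 s -> eps < Rabs (Delta z s) -> In s l.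
Proof.
  intros Hz He.
  set (P := fun tau => exists l : list R,
              forall s, 0 <= s <= tau -> eps < Rabs (Delta z s) -> In s l).
  assert (HP1 : P 1).
  { apply real_induction01.
    - exists nil. intros s Hs Hj. replace s with 0 in Hj by lra.
      rewrite Delta_0, Rabs_R0 in Hj. lra.
    - intros c Hc. destruct (Delta_small_near z c eps Hz Hc He) as [d [Hd Hd']].
      exists d. split; auto. intros t0 t Ht0 Ht Ht0d Htd [l0 Hl0].
      exists (c :: l0). intros s Hs Hj.
      destruct (Rle_lt_dec s t0) as [Hst0 | Hst0]; [right; apply Hl0; auto; lra |].
      destruct (Req_dec s c) as [-> | Hsc]; [left; reflexivity |].
      exfalso. assert (Rabs (Delta z s) <= eps); [| lra].
      unfold in01 in *. apply Hd'; [unfold in01; lra | exact Hsc | apply Rabs_def1; lra]. }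
  destruct HP1 as [l Hl]. exists l. intros s Hs Hj. apply Hl; auto.
Qed.

Lemma finite_argmax (P : R -> Prop) (f : R -> R) (l : list R) a :
  (forall u, P u -> In u l) -> P a -> exists u, P u /\ forall v, P v -> f v <= f u.
Proof.
  revert P a. induction l as [| b l IH]; intros P a Hfin Pa; [destruct (Hfin a Pa) |].
  destruct (classic (exists u, P u /\ u <> b)) as [[u [Pu Hub]] | Hno].
  - destruct (IH (fun v => P v /\ v <> b) u) as [w [[Pw _] Hw]]; [| split; auto |].
    { intros v [Pv Hvb]. destruct (Hfin v Pv) as [-> | Hv]; [contradiction | exact Hv]. }
    destruct (classic (P b /\ f w <= f b)) as [[Pb Hwb] | Hwb].
    + exists b. split; auto. intros v Pv.
      destruct (Req_dec v b) as [-> | Hvb]; [lra |]. specialize (Hw v (conj Pv Hvb)). lra.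
    + exists w. split; auto. intros v Pv.
      destruct (Req_dec v b) as [-> | Hvb]; [| apply Hw; auto].
      apply Rnot_lt_le. intro Hlt. apply Hwb. split; auto; lra.
  - assert (Hb : forall v, P v -> v = b) by (intros v Pv; apply NNPP; intro; apply Hno; eauto).
    exists a. split; auto. intros v Pv. rewrite (Hb v Pv), (Hb a Pa). lra.
Qed.

Lemma value_gap_point (f : R -> R) c (l : list R) :
  exists g, 0 < g /\ forall b, In b l -> Rabs (f b - c) < g -> f b = c.
Proof.
  induction l as [| b l [g [Hg Hgl]]]; [exists 1; split; [lra | intros b []] |].
  destruct (Req_dec (f b) c) as [Hbc | Hbc].
  - exists g. split; auto. intros v [<- | Hv]; auto.
  - assert (Hpos : 0 < Rabs (f b - c)) by (apply Rabs_pos_lt; lra).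
    exists (Rmin g (Rabs (f b - c))). split; [apply Rmin_pos; auto |].
    assert (Hm1 := Rmin_l g (Rabs (f b - c))). assert (Hm2 := Rmin_r g (Rabs (f b - c))).
    intros v [<- | Hv] Hvc; [lra | apply Hgl; auto; lra].
Qed.

Lemma value_gap (f : R -> R) (l : list R) :
  exists g, 0 < g /\ forall a b, In a l -> In b l -> Rabs (f a - f b) < g -> f a = f b.
Proof.
  induction l as [| c l [g [Hg Hgl]]]; [exists 1; split; [lra | intros a b []] |].
  destruct (value_gap_point f (f c) l) as [h [Hh Hhl]].
  exists (Rmin g h). split; [apply Rmin_pos; auto |].
  assert (Hm1 := Rmin_l g h). assert (Hm2 := Rmin_r g h).
  intros a b [<- | Ha] [<- | Hb] Hab; auto.
  - symmetry. apply Hhl; auto. rewrite Rabs_minus_sym. lra.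
  - apply Hhl; auto. lra.
  - apply Hgl; auto. lra.
Qed.

(* The least point of [P] that has a [P]-predecessor with another value, and its
   immediate predecessor. *)
Lemma finite_consecutive_change (P : R -> Prop) (f : R -> R) (l : list R) a b :
  (forall u, P u -> In u l) -> P a -> P b -> f a <> f b ->
  exists c d, P c /\ P d /\ d < c /\ (forall u, P u -> ~ (d < u < c)) /\ f d <> f c.
Proof.
  intros Hfin Pa Pb Hab.
  set (Q := fun u => P u /\ exists w, P w /\ w < u /\ f w <> f u).
  destruct (finite_argmax Q (fun u => - u) l (Rmax a b)) as [c [[Pc [w [Pw [Hwc Hwf]]]] Hcmin]].
  { intros u [Pu _]. auto. }
  { destruct (Rtotal_order a b) as [Hlt | [-> | Hgt]]; [| contradiction |].
    - rewrite Rmax_right by lra. split; auto. exists a. auto.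
    - rewrite Rmax_left by lra. split; auto. exists b. auto. }
  destruct (finite_argmax (fun u => P u /\ u < c) (fun u => u) l w) as [d [[Pd Hdc] Hdmax]].
  { intros u [Pu _]. auto. } { auto. }
  exists c, d. repeat split; auto.
  - intros u Pu [Hdu Huc]. assert (u <= d) by (apply Hdmax; auto). lra.
  - intro Hdf. assert (Hwd : w <= d) by (apply Hdmax; auto).
    destruct Hwd as [Hwd | ->]; [| contradiction].
    assert (HQd : Q d) by (split; auto; exists w; rewrite Hdf; auto).
    specialize (Hcmin d HQd). lra.
Qed.

Lemma SDelta_of_max (z : R -> R) tau s : 0 <= s <= tau ->
  (forall u, 0 <= u <= tau -> Rabs (Delta z u) <= Rabs (Delta z s)) ->
  SDelta z tau = Rabs (Delta z s).
Proof.
  intros Hs Hmax.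
  assert (Hlub : is_lub (fun m => exists u, 0 <= u <= tau /\ m = Rabs (Delta z u))
                   (Rabs (Delta z s))).
  { split.
    - intros m [u [Hu ->]]. auto.
    - intros b Hb. apply Hb. exists s. auto. }
  apply (is_lub_u _ _ _ (epsilon_spec (inhabits 0) _ (ex_intro _ _ Hlub)) Hlub).
Qed.

Lemma max_jump_exists (z : R -> R) tau : cadlag z -> 0 <= tau <= 1 ->
  exists s, 0 <= s <= tau /\ forall u, 0 <= u <= tau -> Rabs (Delta z u) <= Rabs (Delta z s).
Proof.
  intros Hz Ht.
  destruct (classic (exists s0, 0 <= s0 <= tau /\ 0 < Rabs (Delta z s0)))
    as [[s0 [Hs0 Hj0]] | Hno].
  - set (e := Rabs (Delta z s0) / 2).
    destruct (finite_big_jumps z e Hz ltac:(unfold e; lra)) as [l Hl].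
    destruct (finite_argmax (fun u => 0 <= u <= tau /\ e < Rabs (Delta z u))
                (fun u => Rabs (Delta z u)) l s0) as [s [[Hs Hse] Hmax]].
    { intros u [Hu Hue]. apply Hl; auto. unfold in01; lra. }
    { split; auto. unfold e; lra. }
    exists s. split; auto. intros u Hu.
    destruct (Rle_lt_dec (Rabs (Delta z u)) e); [lra | apply Hmax; auto].
  - exists 0. split; [lra |]. rewrite Delta_0, Rabs_R0. intros u Hu.
    apply Rnot_lt_le. intro Hj. apply Hno. eauto.
Qed.

Lemma SDelta_ub (z : R -> R) tau s : cadlag z -> in01 tau -> 0 <= s <= tau ->
  Rabs (Delta z s) <= SDelta z tau.
Proof.
  intros Hz Ht Hs. destruct (max_jump_exists z tau Hz Ht) as [m [Hm Hmax]].
  rewrite (SDelta_of_max z tau m Hm Hmax). auto.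
Qed.

Lemma SDelta_attained (z : R -> R) tau : cadlag z -> in01 tau ->
  exists s, 0 <= s <= tau /\ Rabs (Delta z s) = SDelta z tau.
Proof.
  intros Hz Ht. destruct (max_jump_exists z tau Hz Ht) as [m [Hm Hmax]].
  exists m. split; auto. symmetry. apply SDelta_of_max; auto.
Qed.

Lemma SDelta_nonneg (z : R -> R) tau : cadlag z -> in01 tau -> 0 <= SDelta z tau.
Proof.
  intros Hz Ht. eapply Rle_trans; [apply Rabs_pos | apply (SDelta_ub z tau 0 Hz Ht)].
  unfold in01 in Ht. lra.
Qed.

Lemma SDelta_le (z : R -> R) a b : cadlag z -> 0 <= a <= b -> b <= 1 ->
  SDelta z a <= SDelta z b.
Proof.
  intros Hz Hab Hb.
  destruct (SDelta_attained z a Hz ltac:(unfold in01; lra)) as [s [Hs <-]].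
  apply SDelta_ub; auto; unfold in01; lra.
Qed.

Definition is_record (z : R -> R) (tau s : R) : Prop :=
  0 <= s <= tau /\ Rabs (Delta z s) = SDelta z tau.

Lemma Lrec_of_last (z : R -> R) tau L : is_record z tau L ->
  (forall s, is_record z tau s -> s <= L) -> Lrec z tau = L.
Proof.
  intros HL Hlast.
  assert (Hlub : is_lub (is_record z tau) L) by (split; [exact Hlast | intros b Hb; apply Hb, HL]).
  apply (is_lub_u _ _ _ (epsilon_spec (inhabits 0) _ (ex_intro _ _ Hlub)) Hlub).
Qed.

Lemma last_record_exists (z : R -> R) tau : cadlag z -> in01 tau ->
  exists L, is_record z tau L /\ forall s, is_record z tau s -> s <= L.
Proof.
  intros Hz Ht. assert (HM := SDelta_nonneg z tau Hz Ht).
  destruct (Rle_lt_dec (SDelta z tau) 0) as [HM0 | HM0].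
  - exists tau. unfold is_record. split; [| intros s [Hs _]; lra].
    assert (H := SDelta_ub z tau tau Hz Ht ltac:(unfold in01 in Ht; lra)).
    assert (H' := Rabs_pos (Delta z tau)). unfold in01 in Ht. split; lra.
  - destruct (finite_big_jumps z (SDelta z tau / 2) Hz ltac:(lra)) as [l Hl].
    destruct (SDelta_attained z tau Hz Ht) as [s0 Hs0].
    apply (finite_argmax (is_record z tau) (fun u => u) l s0); auto.
    intros u [Hu HuM]. apply Hl; unfold in01 in *; lra.
Qed.

Lemma Lrec_spec (z : R -> R) tau : cadlag z -> in01 tau ->
  is_record z tau (Lrec z tau) /\ forall s, is_record z tau s -> s <= Lrec z tau.
Proof.
  intros Hz Ht. destruct (last_record_exists z tau Hz Ht) as [L [HL Hlast]].
  rewrite (Lrec_of_last z tau L HL Hlast). auto.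
Qed.

Definition record_jump (z : R -> R) (t : R) : R := Delta z (Lrec z t).

Lemma Rabs_record_jump (z : R -> R) tau : cadlag z -> in01 tau ->
  Rabs (record_jump z tau) = SDelta z tau.
Proof. intros Hz Ht. apply (Lrec_spec z tau Hz Ht). Qed.

Lemma Rabs_eq_opp a b : Rabs a = Rabs b -> b <> a -> a = - b.
Proof.
  intros H Hne. apply Rsqr_eq_asb_1 in H. unfold Rsqr in H.
  assert (Hsq : (a - b) * (a + b) = 0) by lra.
  destruct (Rmult_integral _ _ Hsq); [exfalso; apply Hne |]; lra.
Qed.

Lemma records_same_jump (x : R -> R) tau a b : cadlag x -> no_sign_change x -> in01 tau ->
  0 < SDelta x tau -> is_record x tau a -> is_record x tau b -> Delta x a = Delta x b.
Proof.
  intros Hx Hn Ht HM Ha Hb. apply NNPP. intro Hab.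
  assert (Hrec : forall u, is_record x tau u -> Aset x tau u).
  { intros u [[Hu0 Hu] HuM]. split; auto. split; auto. split; auto.
    destruct Hu0 as [| <-]; auto. rewrite Delta_0, Rabs_R0 in HuM. lra. }
  destruct (finite_big_jumps x (SDelta x tau / 2) Hx ltac:(lra)) as [l Hl].
  destruct (finite_consecutive_change (Aset x tau) (Delta x) l a b) as
    [c [d [Hc [Hd [Hdc [Hbetween Hdiff]]]]]]; auto.
  { intros u [_ [Hu HuM]]. apply Hl; unfold in01 in *; lra. }
  apply (Hn tau Ht c). split; [exact Hc |]. exists d. do 3 (split; [assumption |]).
  destruct Hc as [_ [_ HcM]]. destruct Hd as [_ [_ HdM]].
  apply Rabs_eq_opp; congruence.
Qed.

(* Only finitely many jump moduli exceed [eta / 2], so distinct ones are separated. *)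
Lemma near_record_is_record (x : R -> R) eta : cadlag x -> 0 < eta ->
  exists g, 0 < g /\ forall tau, in01 tau -> eta <= SDelta x tau ->
    forall s, 0 <= s <= tau -> SDelta x tau - g <= Rabs (Delta x s) -> is_record x tau s.
Proof.
  intros Hx He.
  destruct (finite_big_jumps x (eta / 2) Hx ltac:(lra)) as [l Hl].
  destruct (value_gap (fun u => Rabs (Delta x u)) l) as [g [Hg Hgap]].
  exists (Rmin g (eta / 4) / 2). split; [assert (Hm := Rmin_pos g (eta / 4) Hg ltac:(lra)); lra |].
  assert (Hm1 := Rmin_l g (eta / 4)). assert (Hm2 := Rmin_r g (eta / 4)).
  intros tau Ht HM s Hs Hsg. split; auto.
  destruct (SDelta_attained x tau Hx Ht) as [m [Hm HmM]].
  assert (Hsub := SDelta_ub x tau s Hx Ht Hs).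
  rewrite <- HmM. apply Hgap; [apply Hl | apply Hl | ]; unfold in01 in *;
    try (rewrite ?HmM; lra).
  rewrite HmM. clear - Hsg Hsub Hm1 Hg. split_Rabs; lra.
Qed.

Lemma Delta_close (y x : R -> R) d : cadlag y -> cadlag x ->
  (forall t, in01 t -> Rabs (y t - x t) <= d) ->
  forall s, in01 s -> Rabs (Delta y s - Delta x s) <= 2 * d.
Proof.
  intros Hy Hx Hd s Hs.
  destruct (Req_dec s 0) as [-> | Hs0].
  - rewrite !Delta_0, Rminus_0_r, Rabs_R0.
    assert (H := Hd 0 ltac:(unfold in01; lra)). assert (H' := Rabs_pos (y 0 - x 0)). lra.
  - unfold in01 in Hs. rewrite !Delta_pos by lra.
    assert (Hlim : Rabs (leftlim y s - leftlim x s - 0) <= d).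
    { apply (left_lim_bound (fun t => y t - x t) s _ 0); try lra.
      - apply is_left_lim_minus; apply leftlim_spec; auto; lra.
      - intros u Hu _. rewrite Rminus_0_r. apply Hd. unfold in01. lra. }
    assert (Hys := Hd s ltac:(unfold in01; lra)).
    clear - Hlim Hys. split_Rabs; lra.
Qed.

Section Perturbation.

Variables x y : R -> R.
Variable d : R.
Hypothesis Hx : cadlag x.
Hypothesis Hy : cadlag y.
Hypothesis Hclose : forall t, in01 t -> Rabs (y t - x t) <= d.

Lemma record_jump_small tau : in01 tau ->
  Rabs (record_jump y tau - record_jump x tau) <= 2 * SDelta x tau + 2 * d.
Proof.
  intros Ht. unfold record_jump.
  destruct (Lrec_spec y tau Hy Ht) as [[HLy _] _].
  destruct (Lrec_spec x tau Hx Ht) as [[_ HLxM] _].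
  assert (Hclose_y := Delta_close y x d Hy Hx Hclose (Lrec y tau) ltac:(unfold in01 in *; lra)).
  assert (Hbound := SDelta_ub x tau (Lrec y tau) Hx Ht HLy).
  clear - Hclose_y Hbound HLxM. split_Rabs; lra.
Qed.

(* Comparing both paths at the last record times of [x] and of [y] shows that [x]
   jumps by at least [SDelta x tau - 4 d] at the last record time of [y]; that time
   is therefore a record of [x], where [x] jumps exactly as at its own last record. *)
Lemma record_jump_stable g tau : no_sign_change x -> in01 tau -> 0 < SDelta x tau ->
  4 * d <= g ->
  (forall s, 0 <= s <= tau -> SDelta x tau - g <= Rabs (Delta x s) -> is_record x tau s) ->
  Rabs (record_jump y tau - record_jump x tau) <= 2 * d.
Proof.
  intros Hn Ht HM Hdg Hnear. unfold record_jump.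
  destruct (Lrec_spec y tau Hy Ht) as [[HLy HLyM] _].
  destruct (Lrec_spec x tau Hx Ht) as [[HLx HLxM] _].
  set (Ly := Lrec y tau) in *. set (Lx := Lrec x tau) in *.
  assert (Hy_Ly := Delta_close y x d Hy Hx Hclose Ly ltac:(unfold in01 in *; lra)).
  assert (Hy_Lx := Delta_close y x d Hy Hx Hclose Lx ltac:(unfold in01 in *; lra)).
  assert (Hmax_y := SDelta_ub y tau Lx Hy Ht HLx).
  assert (Hrec : is_record x tau Ly).
  { apply Hnear; auto. clear - Hy_Ly Hy_Lx Hmax_y HLyM HLxM Hdg. split_Rabs; lra. }
  assert (HxL : Delta x Ly = Delta x Lx) by (apply (records_same_jump x tau); auto; split; auto).
  rewrite <- HxL. exact Hy_Ly.
Qed.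

End Perturbation.

Lemma trim_unif_cv (x : R -> R) (y : nat -> R -> R) : cadlag x -> no_sign_change x ->
  (forall n, cadlag (y n)) -> unif_cv y x -> unif_cv (fun n => trim (y n)) (trim x).
Proof.
  intros Hx Hn Hy Hcv eps He.
  destruct (near_record_is_record x (eps / 4) Hx ltac:(lra)) as [g [Hg Hnear]].
  set (d := Rmin (eps / 8) (g / 4)).
  assert (Hd1 := Rmin_l (eps / 8) (g / 4)). assert (Hd2 := Rmin_r (eps / 8) (g / 4)).
  assert (Hd0 : 0 < d) by (apply Rmin_pos; lra). fold d in Hd1, Hd2.
  destruct (Hcv d Hd0) as [N HN]. exists N. intros n Hnn tau Ht.
  specialize (HN n Hnn).
  assert (Hjump : Rabs (record_jump (y n) tau - record_jump x tau) <= 2 * d + eps / 2).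
  { destruct (Rlt_le_dec (SDelta x tau) (eps / 4)) as [Hsmall | Hbig].
    - assert (H := record_jump_small x (y n) d Hx (Hy n) HN tau Ht). lra.
    - assert (H := record_jump_stable x (y n) d Hx (Hy n) HN g tau Hn Ht ltac:(lra)
                     ltac:(lra) (Hnear tau Ht Hbig)).
      lra. }
  assert (Hpt := HN tau Ht).
  change (Rabs ((y n tau - record_jump (y n) tau) - (x tau - record_jump x tau)) <= eps).
  clear - Hjump Hpt Hd1. split_Rabs; lra.
Qed.

Section TimeChange.

Variable l : R -> R.
Hypothesis Hl : in_Lambda l.

Lemma Lambda_le s t : in01 s -> in01 t -> (l s <= l t <-> s <= t).
Proof.
  intros Hs Ht. destruct Hl as [_ [_ [_ [Hmono _]]]]. split; intro H.
  - apply Rnot_lt_le. intro Hts. specialize (Hmono t s Ht Hs Hts). lra.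
  - destruct H as [H | <-]; [left; auto | right; reflexivity].
Qed.

Lemma Lambda_surj v : 0 <= v <= 1 -> exists s, in01 s /\ l s = v.
Proof.
  intros Hv. destruct Hl as [Hl0 [Hl1 [_ [_ Hcont]]]].
  apply NNPP. intro Hno.
  assert (Hne : forall s, in01 s -> l s <> v) by (intros s Hs Heq; apply Hno; eauto).
  assert (HP1 : l 1 < v).
  { apply (real_induction01 (fun t => l t < v)).
    - rewrite Hl0. destruct (proj1 Hv) as [| <-]; auto.
      exfalso. apply (Hne 0); [unfold in01; lra | exact Hl0].
    - intros c Hc.
      destruct (Rtotal_order (l c) v) as [Hlt | [Heq | Hgt]]; [| destruct (Hne c Hc Heq) |].
      + destruct (Hcont c Hc (v - l c) ltac:(lra)) as [d [Hd Hd']].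
        exists d. split; auto. intros t0 t _ Ht _ Htd _.
        assert (H := Hd' t Ht ltac:(apply Rabs_def1; lra)). apply Rabs_def2 in H. lra.
      + destruct (Hcont c Hc (l c - v) ltac:(lra)) as [d [Hd Hd']].
        exists d. split; auto. intros t0 t Ht0 _ Ht0d _ Hlt0. exfalso.
        assert (H := Hd' t0 Ht0 ltac:(apply Rabs_def1; lra)). apply Rabs_def2 in H. lra. }
  rewrite Hl1 in HP1. lra.
Qed.

Lemma is_left_lim_comp (z : R -> R) t L : 0 < t <= 1 ->
  is_left_lim z (l t) L -> is_left_lim (fun s => z (l s)) t L.
Proof.
  intros Ht HL eps He. destruct Hl as [_ [_ [Hmap [Hmono Hcont]]]].
  destruct (HL eps He) as [d1 [Hd1 Hd1']].
  destruct (Hcont t ltac:(unfold in01; lra) d1 Hd1) as [d2 [Hd2 Hd2']].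
  exists (Rmin d2 t). split; [apply Rmin_pos; lra |].
  assert (Hm1 := Rmin_l d2 t). assert (Hm2 := Rmin_r d2 t).
  intros s Hs0 Hs.
  assert (Hs01 : in01 s) by (unfold in01; lra).
  assert (H1 := Hd2' s Hs01 ltac:(apply Rabs_def1; lra)). apply Rabs_def2 in H1.
  assert (H2 : l s < l t) by (apply Hmono; auto; unfold in01; lra).
  assert (H3 := Hmap s Hs01). unfold in01 in H3.
  apply Hd1'; lra.
Qed.

Lemma cadlag_comp (z : R -> R) : cadlag z -> cadlag (fun s => z (l s)).
Proof.
  intros Hz. destruct Hl as [Hl0 [Hl1 [Hmap [Hmono Hcont]]]]. split.
  - intros t Ht eps He.
    assert (Ht01 : in01 t) by (unfold in01; lra).
    assert (Hlt1 : l t < 1) by (rewrite <- Hl1; apply Hmono; auto; unfold in01; lra).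
    assert (Hlt := Hmap t Ht01). unfold in01 in Hlt.
    destruct (proj1 Hz (l t) ltac:(lra) eps He) as [d1 [Hd1 Hd1']].
    destruct (Hcont t Ht01 d1 Hd1) as [d2 [Hd2 Hd2']].
    exists d2. split; auto. intros s Hs Hs1.
    assert (Hs01 : in01 s) by (unfold in01; lra).
    assert (H1 := Hd2' s Hs01 ltac:(apply Rabs_def1; lra)). apply Rabs_def2 in H1.
    assert (H2 : l t <= l s) by (apply Lambda_le; auto; lra).
    assert (H3 := Hmap s Hs01). unfold in01 in H3.
    apply Hd1'; lra.
  - intros t Ht.
    assert (Hlt0 : 0 < l t) by (rewrite <- Hl0; apply Hmono; unfold in01; lra).
    assert (Hlt := Hmap t ltac:(unfold in01; lra)). unfold in01 in Hlt.
    destruct (proj2 Hz (l t) ltac:(lra)) as [L HL].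
    exists L. apply is_left_lim_comp; auto.
Qed.

Lemma Delta_comp (z : R -> R) s : cadlag z -> in01 s ->
  Delta (fun u => z (l u)) s = Delta z (l s).
Proof.
  intros Hz Hs. destruct Hl as [Hl0 [_ [Hmap [Hmono _]]]].
  destruct (Req_dec s 0) as [-> | Hs0]; [rewrite Hl0, !Delta_0; reflexivity |].
  unfold in01 in Hs.
  assert (Hls : 0 < l s) by (rewrite <- Hl0; apply Hmono; unfold in01; lra).
  assert (Hls1 := Hmap s ltac:(unfold in01; lra)). unfold in01 in Hls1.
  rewrite !Delta_pos by lra. f_equal.
  apply (left_lim_unique (fun u => z (l u)) s); [lra | |].
  - apply leftlim_spec; [apply cadlag_comp; auto | lra].
  - apply is_left_lim_comp; [lra |]. apply leftlim_spec; auto; lra.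
Qed.

Lemma SDelta_comp (z : R -> R) tau : cadlag z -> in01 tau ->
  SDelta (fun u => z (l u)) tau = SDelta z (l tau).
Proof.
  intros Hz Ht. assert (Hmap := proj1 (proj2 (proj2 Hl))).
  assert (Hzl := cadlag_comp z Hz).
  destruct (max_jump_exists _ tau Hzl Ht) as [m [Hm Hmax]].
  assert (Hm01 : in01 m) by (unfold in01 in *; lra).
  rewrite (SDelta_of_max _ tau m Hm Hmax), Delta_comp by auto.
  symmetry. apply SDelta_of_max.
  - assert (H := Hmap m Hm01). assert (Hle := proj2 (Lambda_le m tau Hm01 Ht) (proj2 Hm)).
    unfold in01 in H. lra.
  - intros u Hu. assert (Hlt := Hmap tau Ht). unfold in01 in Hlt.
    destruct (Lambda_surj u ltac:(lra)) as [s [Hs <-]].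
    assert (Hst := proj1 (Lambda_le s tau Hs Ht) (proj2 Hu)).
    rewrite <- !Delta_comp by auto. apply Hmax. unfold in01 in Hs. lra.
Qed.

Lemma Lrec_comp (z : R -> R) tau : cadlag z -> in01 tau ->
  Lrec z (l tau) = l (Lrec (fun u => z (l u)) tau).
Proof.
  intros Hz Ht. assert (Hmap := proj1 (proj2 (proj2 Hl))).
  assert (Hzl := cadlag_comp z Hz).
  destruct (Lrec_spec _ tau Hzl Ht) as [[HL HLM] Hlast].
  set (L := Lrec (fun u => z (l u)) tau) in *.
  assert (HL01 : in01 L) by (unfold in01 in *; lra).
  assert (Hlt := Hmap tau Ht). unfold in01 in Hlt.
  apply Lrec_of_last.
  - assert (HlL := Hmap L HL01). assert (Hle := proj2 (Lambda_le L tau HL01 Ht) (proj2 HL)).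
    unfold in01 in HlL. split; [lra |].
    rewrite <- Delta_comp, <- SDelta_comp by auto. exact HLM.
  - intros u [Hu HuM]. destruct (Lambda_surj u ltac:(lra)) as [s [Hs <-]].
    apply (Lambda_le s L Hs HL01). apply Hlast. split.
    + unfold in01 in Hs. split; [lra |]. apply (Lambda_le s tau Hs Ht), Hu.
    + rewrite Delta_comp, SDelta_comp by auto. exact HuM.
Qed.

Lemma trim_comp (z : R -> R) tau : cadlag z -> in01 tau ->
  trim (fun u => z (l u)) tau = trim z (l tau).
Proof.
  intros Hz Ht.
  destruct (Lrec_spec _ tau (cadlag_comp z Hz) Ht) as [[HL _] _].
  assert (HL01 : in01 (Lrec (fun u => z (l u)) tau)) by (unfold in01 in *; lra).
  unfold trim. rewrite Lrec_comp, Delta_comp by auto. reflexivity.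
Qed.

End TimeChange.

Lemma Lrec_stable (z : R -> R) a b : cadlag z -> 0 <= a <= b -> b <= 1 -> 0 < SDelta z a ->
  (forall s, a < s <= b -> Rabs (Delta z s) < SDelta z a) -> Lrec z b = Lrec z a.
Proof.
  intros Hz Hab Hb HM Hsmall.
  assert (Ha01 : in01 a) by (unfold in01; lra).
  destruct (Lrec_spec z a Hz Ha01) as [[HLa HLaM] Hlast].
  assert (HMb : SDelta z b = SDelta z a).
  { rewrite <- HLaM. apply SDelta_of_max; [lra |]. intros s Hs. rewrite HLaM.
    destruct (Rle_lt_dec s a); [apply SDelta_ub; auto; lra | left; apply Hsmall; lra]. }
  apply Lrec_of_last.
  - split; [lra | rewrite HMb; exact HLaM].
  - intros s [Hs HsM]. rewrite HMb in HsM.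
    destruct (Rle_lt_dec s a) as [Hsa | Hsa].
    + apply Hlast. split; [lra | exact HsM].
    + specialize (Hsmall s ltac:(lra)). lra.
Qed.

Lemma record_jump_right_cont (z : R -> R) t : cadlag z -> 0 <= t < 1 ->
  forall eps, 0 < eps -> exists d, 0 < d /\
    forall s, t <= s < t + d -> s <= 1 -> Rabs (record_jump z s - record_jump z t) < eps.
Proof.
  intros Hz Ht eps He.
  assert (Ht01 : in01 t) by (unfold in01; lra).
  assert (HM0 := SDelta_nonneg z t Hz Ht01).
  destruct (Rle_lt_dec (SDelta z t) 0) as [HM | HM].
  - destruct (Delta_small_right z t (eps / 2) Hz Ht01 ltac:(lra)) as [d [Hd Hd']].
    exists d. split; auto. intros s Hs Hs1.
    assert (Hs01 : in01 s) by (unfold in01; lra).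
    destruct (SDelta_attained z s Hz Hs01) as [m [Hm HmM]].
    assert (Hsmall : SDelta z s <= eps / 2).
    { rewrite <- HmM. destruct (Rle_lt_dec m t).
      - assert (H := SDelta_ub z t m Hz Ht01 ltac:(lra)). lra.
      - apply Hd'; lra. }
    assert (H1 := Rabs_record_jump z s Hz Hs01). assert (H2 := Rabs_record_jump z t Hz Ht01).
    clear - H1 H2 Hsmall HM HM0 He. split_Rabs; lra.
  - destruct (Delta_small_right z t (SDelta z t / 2) Hz Ht01 ltac:(lra)) as [d [Hd Hd']].
    exists d. split; auto. intros s Hs Hs1. unfold record_jump.
    rewrite (Lrec_stable z t s Hz ltac:(lra) Hs1 HM), Rminus_diag, Rabs_R0; [lra |].
    intros u Hu. assert (H := Hd' u ltac:(lra) ltac:(lra)). lra.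
Qed.

Lemma record_jump_left_lim (z : R -> R) t : cadlag z -> 0 < t <= 1 ->
  exists L, is_left_lim (record_jump z) t L.
Proof.
  intros Hz Ht.
  destruct (classic (exists t0, 0 <= t0 < t /\ 0 < SDelta z t0)) as [[t0 [Ht0 HM0]] | Hno].
  - destruct (Delta_small_left z t (SDelta z t0 / 2) Hz ltac:(lra) ltac:(lra)) as [d [Hd Hd']].
    set (t1 := Rmax t0 (t - d / 2)).
    assert (Hr1 := Rmax_l t0 (t - d / 2)). assert (Hr2 := Rmax_r t0 (t - d / 2)).
    assert (Ht1 : t1 < t) by (apply Rmax_lub_lt; lra). fold t1 in Hr1, Hr2.
    assert (Hmono := SDelta_le z t0 t1 Hz ltac:(lra) ltac:(lra)).
    exists (record_jump z t1). intros eps He. exists (t - t1). split; [lra |].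
    intros s Hs0 Hs. unfold record_jump.
    rewrite (Lrec_stable z t1 s Hz ltac:(lra) ltac:(lra) ltac:(lra)), Rminus_diag, Rabs_R0;
      [lra |].
    intros u Hu. assert (H := Hd' u ltac:(lra) ltac:(lra)). lra.
  - exists 0. intros eps He. exists t. split; [lra |]. intros s Hs0 Hs.
    assert (Hs01 : in01 s) by (unfold in01; lra).
    assert (HM := SDelta_nonneg z s Hz Hs01).
    assert (HM0 : SDelta z s <= 0) by (apply Rnot_lt_le; intro; apply Hno; exists s; split; [lra | auto]).
    rewrite Rminus_0_r, Rabs_record_jump by auto. lra.
Qed.

Lemma cadlag_record_jump (z : R -> R) : cadlag z -> cadlag (record_jump z).
Proof.
  intros Hz. split; [intros t Ht; apply record_jump_right_cont; auto |].
  intros t Ht. apply record_jump_left_lim; auto.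
Qed.

Lemma cadlag_trim (z : R -> R) : cadlag z -> cadlag (trim z).
Proof. intros Hz. apply (cadlag_minus z (record_jump z) Hz), cadlag_record_jump, Hz. Qed.

Lemma cadlag_trim_iter r (z : R -> R) : cadlag z -> cadlag (trim_iter r z).
Proof. intros Hz. induction r as [| r IH]; [exact Hz | apply cadlag_trim, IH]. Qed.

Lemma unif_cv_ext (f g : nat -> R -> R) (h : R -> R) :
  (forall n t, in01 t -> f n t = g n t) -> unif_cv g h -> unif_cv f h.
Proof.
  intros Hfg Hg eps He. destruct (Hg eps He) as [N HN]. exists N.
  intros n Hn t Ht. rewrite Hfg by exact Ht. apply HN; auto.
Qed.

Lemma trim_comp_unif_cv (x : R -> R) (xn ln : nat -> R -> R) : cadlag x -> no_sign_change x ->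
  (forall n, cadlag (xn n)) -> (forall n, in_Lambda (ln n)) ->
  unif_cv (fun n t => xn n (ln n t)) x -> unif_cv (fun n t => trim (xn n) (ln n t)) (trim x).
Proof.
  intros Hx Hn Hxn Hln Hcv.
  apply (unif_cv_ext _ (fun n => trim (fun t => xn n (ln n t)))).
  - intros n t Ht. symmetry. apply trim_comp; auto.
  - apply trim_unif_cv; auto. intro n. apply cadlag_comp; auto.
Qed.

Lemma trim_iter_comp_unif_cv r (x : R -> R) (xn ln : nat -> R -> R) : cadlag x ->
  (forall j, (j < r)%nat -> no_sign_change (trim_iter j x)) ->
  (forall n, cadlag (xn n)) -> (forall n, in_Lambda (ln n)) ->
  unif_cv (fun n t => xn n (ln n t)) x ->
  unif_cv (fun n t => trim_iter r (xn n) (ln n t)) (trim_iter r x).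
Proof.
  intros Hx Hns Hxn Hln Hcv. induction r as [| r IH]; [exact Hcv |].
  apply (trim_comp_unif_cv (trim_iter r x) (fun n => trim_iter r (xn n)) ln).
  - apply cadlag_trim_iter, Hx.
  - apply Hns. lia.
  - intro n. apply cadlag_trim_iter, Hxn.
  - exact Hln.
  - apply IH. intros j Hj. apply Hns. lia.
Qed.

Lemma trim_iter_jointly_J1_continuous r (x : R -> R) : cadlag x ->
  (forall j, (j < r)%nat -> no_sign_change (trim_iter j x)) ->
  jointly_J1_continuous_at (trim_iter r) x.
Proof.
  intros Hx Hns xn Hxn [ln [Hln [Hid Hcv]]].
  exists ln. do 3 (split; [assumption |]).
  apply trim_iter_comp_unif_cv; auto.
Qed.

Theorem theorem2p1 :
  (forall x : R -> R, cadlag x -> no_sign_change x ->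
     jointly_J1_continuous_at trim x) /\
  (forall (r : nat) (x : R -> R), cadlag x ->
     (forall j, (j < r)%nat -> no_sign_change (trim_iter j x)) ->
     jointly_J1_continuous_at (trim_iter r) x).
Proof.
  split; [| exact trim_iter_jointly_J1_continuous].
  intros x Hx Hn. apply (trim_iter_jointly_J1_continuous 1 x Hx).
  intros j Hj. replace j with 0%nat by lia. exact Hn.
Qed.
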